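(* In the call-by-value $\lambda$-calculus, contextual equivalence and evaluation-contextual equivalence coincide: for all $M,N\in\Lambda^\bullet$, $M\simeq^v N$ if and only if $M\cong^v N$.
   Context: $\Lambda^\bullet$ is the set of closed $\lambda$-terms; values are closed abstractions $\lambda x.P$. Call-by-value reduction $\longrightarrow$ on closed terms is given by: $MN\longrightarrow MN'$ if $N\longrightarrow N'$; $MV\longrightarrow M'V$ if $M\longrightarrow M'$ and $V$ is a value; $(\lambda x.P)V\longrightarrow P[V/x]$ if $V$ is a value. $\Longrightarrow$ is the reflexive transitive closure; $M{\Downarrow}$ means $M\Longrightarrow V$ for some value $V$. Contexts are generated by $C::=x\mid[\cdot]\mid C\,C\mid\lambda x.C$ and $C[M]$ fills every hole with $M$ (capture allowed). $M\simeq^v N$ iff for all contexts $C$ with $C[M],C[N]$ closed, $C[M]{\Downarrow}\iff C[N]{\Downarrow}$. Call-by-value evaluation contexts are $\mathcal{E}::=[\cdot]\mid M\,\mathcal{E}\mid\mathcal{E}\,V$ with $M\in\Lambda^\bullet$ and $V$ a value; $M\cong^v N$ iff for all evaluation contexts $\mathcal{E}$, $\mathcal{E}[M]{\Downarrow}\iff\mathcal{E}[N]{\Downarrow}$. *)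

From Stdlib Require Import Arith Relations.

Inductive term : Type :=
| Var : nat -> term
| App : term -> term -> term
| Lam : term -> term.

Fixpoint closed_at (n : nat) (t : term) : Prop :=
  match t with
  | Var i => i < n
  | App t1 t2 => closed_at n t1 /\ closed_at n t2
  | Lam t1 => closed_at (S n) t1
  end.

Definition closed (t : term) : Prop := closed_at 0 t.

Definition is_value (t : term) : Prop := closed t /\ exists P, t = Lam P.

Fixpoint lift (c d : nat) (t : term) : term :=
  match t with
  | Var i => if i <? c then Var i else Var (i + d)
  | App t1 t2 => App (lift c d t1) (lift c d t2)
  | Lam t1 => Lam (lift (S c) d t1)
  end.

Fixpoint subst (k : nat) (v : term) (t : term) : term :=
  match t with
  | Var i =>
      if i <? k then Var i
      else if i =? k then lift 0 k v
      else Var (i - 1)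
  | App t1 t2 => App (subst k v t1) (subst k v t2)
  | Lam t1 => Lam (subst (S k) v t1)
  end.

(* call-by-value reduction on closed terms (right-to-left, as in the paper) *)
Inductive step : term -> term -> Prop :=
| step_appR : forall M N N', closed M -> step N N' -> step (App M N) (App M N')
| step_appL : forall M M' V, is_value V -> step M M' -> step (App M V) (App M' V)
| step_beta : forall P V, closed (Lam P) -> is_value V -> step (App (Lam P) V) (subst 0 V P).

Definition steps : term -> term -> Prop := clos_refl_trans term step.

Definition converges (M : term) : Prop := exists V, steps M V /\ is_value V.

(* general contexts; filling is capturing (no shifting of the plugged term) *)
Inductive ctx : Type :=
| CVar : nat -> ctx
| CHole : ctx
| CApp : ctx -> ctx -> ctx
| CLam : ctx -> ctx.

Fixpoint plug (C : ctx) (M : term) : term :=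
  match C with
  | CVar i => Var i
  | CHole => M
  | CApp C1 C2 => App (plug C1 M) (plug C2 M)
  | CLam C1 => Lam (plug C1 M)
  end.

Definition ctx_equiv (M N : term) : Prop :=
  forall C : ctx, closed (plug C M) -> closed (plug C N) ->
    (converges (plug C M) <-> converges (plug C N)).

Inductive ectx : Type :=
| EHole : ectx
| EAppR : term -> ectx -> ectx
| EAppL : ectx -> term -> ectx.

Fixpoint valid_ectx (E : ectx) : Prop :=
  match E with
  | EHole => True
  | EAppR M E1 => closed M /\ valid_ectx E1
  | EAppL E1 V => is_value V /\ valid_ectx E1
  end.

Fixpoint eplug (E : ectx) (M : term) : term :=
  match E with
  | EHole => M
  | EAppR N E1 => App N (eplug E1 M)
  | EAppL E1 V => App (eplug E1 M) V
  end.

Definition ectx_equiv (M N : term) : Prop :=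
  forall E : ectx, valid_ectx E ->
    (converges (eplug E M) <-> converges (eplug E N)).

From Stdlib Require Import Arith Relations Lia Wf_nat.

(* For the converse, let C[M] converge and
   argue by induction on the (deterministic) reduction of C[M], and inside that on
   the number of holes of C.  Look for the redex of C[M] along the evaluation
   order: either C is an abstraction, or the redex lies in C itself and C[X]
   reduces to C'[X] uniformly in closed X, or some hole of C sits in evaluation
   position, C = E[[.]].  In the last case fill that single hole with M: the
   context E[M] has one hole fewer and E[M][M] = C[M], so E[M][N] = E_N[M]
   converges by induction (E_N being E with its side contexts filled by N),
   hence so does E_N[N] = C[N] by evaluation-context equivalence. *)

Lemma closed_at_weaken t n m : closed_at n t -> n <= m -> closed_at m t.
Proof.
  revert n m; induction t; simpl; intros n' m Ht Hle.
  - lia.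
  - destruct Ht; split; eauto.
  - apply (IHt (S n')); [assumption | lia].
Qed.

Lemma lift_closed_at t c d : closed_at c t -> lift c d t = t.
Proof.
  revert c; induction t; simpl; intros c Ht.
  - destruct (Nat.ltb_spec n c); [reflexivity | lia].
  - destruct Ht; f_equal; auto.
  - f_equal; auto.
Qed.

Lemma subst_closed_at t k v : closed_at k t -> subst k v t = t.
Proof.
  revert k; induction t; simpl; intros k Ht.
  - destruct (Nat.ltb_spec n k); [reflexivity | lia].
  - destruct Ht; f_equal; auto.
  - f_equal; auto.
Qed.

Lemma closed_at_subst P m k V :
  closed_at (S m) P -> closed V -> k <= m -> closed_at m (subst k V P).
Proof.
  revert m k; induction P; simpl; intros m k HP HV Hk.
  - destruct (Nat.ltb_spec n k); simpl; [lia |].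
    destruct (Nat.eqb_spec n k); simpl; [| lia].
    rewrite lift_closed_at by exact HV.
    apply (closed_at_weaken _ 0); [exact HV | lia].
  - destruct HP; split; auto.
  - apply IHP; [assumption | assumption | lia].
Qed.

Lemma step_closed a b : step a b -> closed a -> closed b.
Proof.
  unfold closed; induction 1; simpl; intros Ha.
  - destruct Ha; split; auto.
  - destruct Ha; split; auto.
  - destruct Ha as [HP HV]; apply closed_at_subst; auto.
Qed.

Lemma lam_irreducible P t : ~ step (Lam P) t.
Proof. intros H; inversion H. Qed.

Lemma value_irreducible V t : is_value V -> ~ step V t.
Proof. intros [_ [P ->]]; apply lam_irreducible. Qed.

Lemma step_deterministic a b c : step a b -> step a c -> b = c.
Proof.
  intros Hb; revert c; induction Hb; intros c Hc; inversion Hc; subst;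
    try reflexivity;
    try (exfalso; eapply lam_irreducible; eassumption);
    try (exfalso; eapply value_irreducible; eassumption);
    f_equal; auto.
Qed.

Lemma converges_value V : is_value V -> converges V.
Proof. intros HV; exists V; split; [apply rt_refl | exact HV]. Qed.

(* A convergent term has only finitely long reductions, since reduction is deterministic. *)
Lemma converges_Acc T : converges T -> Acc (fun b a => step a b) T.
Proof.
  intros [V [HTV HV]]; apply clos_rt_rt1n in HTV.
  induction HTV as [V | T T' V HT _ IH].
  - constructor; intros t Ht; exfalso; exact (value_irreducible _ _ HV Ht).
  - constructor; intros t Ht; rewrite <- (step_deterministic _ _ _ HT Ht); auto.
Qed.

Fixpoint ctx_closed_at (n : nat) (C : ctx) : Prop :=
  match C with
  | CVar i => i < n
  | CHole => True
  | CApp C1 C2 => ctx_closed_at n C1 /\ ctx_closed_at n C2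
  | CLam C1 => ctx_closed_at (S n) C1
  end.

Fixpoint holes (C : ctx) : nat :=
  match C with
  | CVar _ => 0
  | CHole => 1
  | CApp C1 C2 => holes C1 + holes C2
  | CLam C1 => holes C1
  end.

Fixpoint ctx_of_term (t : term) : ctx :=
  match t with
  | Var i => CVar i
  | App t1 t2 => CApp (ctx_of_term t1) (ctx_of_term t2)
  | Lam t1 => CLam (ctx_of_term t1)
  end.

Lemma plug_ctx_of_term t X : plug (ctx_of_term t) X = t.
Proof. induction t; simpl; congruence. Qed.

Lemma holes_ctx_of_term t : holes (ctx_of_term t) = 0.
Proof. induction t; simpl; lia. Qed.

Lemma closed_at_plug X C k : closed X -> closed_at k (plug C X) <-> ctx_closed_at k C.
Proof.
  intros HX; revert k; induction C; simpl; intros k; try tauto.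
  - split; [tauto | intros _; apply (closed_at_weaken _ 0); [exact HX | lia]].
  - rewrite IHC1, IHC2; tauto.
  - apply IHC.
Qed.

Fixpoint ctx_lift (c d : nat) (C : ctx) : ctx :=
  match C with
  | CVar i => if i <? c then CVar i else CVar (i + d)
  | CHole => CHole
  | CApp C1 C2 => CApp (ctx_lift c d C1) (ctx_lift c d C2)
  | CLam C1 => CLam (ctx_lift (S c) d C1)
  end.

Fixpoint ctx_subst (k : nat) (V : ctx) (C : ctx) : ctx :=
  match C with
  | CVar i => if i <? k then CVar i else if i =? k then ctx_lift 0 k V else CVar (i - 1)
  | CHole => CHole
  | CApp C1 C2 => CApp (ctx_subst k V C1) (ctx_subst k V C2)
  | CLam C1 => CLam (ctx_subst (S k) V C1)
  end.

(* Filling with a closed term commutes with lifting and substitution: the plugged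
   term is left untouched by both. *)
Lemma plug_ctx_lift X C c d : closed X -> plug (ctx_lift c d C) X = lift c d (plug C X).
Proof.
  intros HX; revert c; induction C; simpl; intros c.
  - destruct (n <? c); reflexivity.
  - symmetry; apply lift_closed_at, (closed_at_weaken _ 0); [exact HX | lia].
  - rewrite IHC1, IHC2; reflexivity.
  - rewrite IHC; reflexivity.
Qed.

Lemma plug_ctx_subst X C k V :
  closed X -> plug (ctx_subst k V C) X = subst k (plug V X) (plug C X).
Proof.
  intros HX; revert k; induction C; simpl; intros k.
  - destruct (n <? k); [reflexivity |].
    destruct (n =? k); [apply plug_ctx_lift, HX | reflexivity].
  - symmetry; apply subst_closed_at, (closed_at_weaken _ 0); [exact HX | lia].
  - rewrite IHC1, IHC2; reflexivity.
  - rewrite IHC; reflexivity.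
Qed.

Inductive ectx_ctx : Type :=
| ECHole : ectx_ctx
| ECAppR : ctx -> ectx_ctx -> ectx_ctx
| ECAppL : ectx_ctx -> ctx -> ectx_ctx.

Fixpoint ectx_ctx_fill (E : ectx_ctx) (D : ctx) : ctx :=
  match E with
  | ECHole => D
  | ECAppR C E1 => CApp C (ectx_ctx_fill E1 D)
  | ECAppL E1 V => CApp (ectx_ctx_fill E1 D) V
  end.

Fixpoint ectx_ctx_plug (E : ectx_ctx) (X : term) : ectx :=
  match E with
  | ECHole => EHole
  | ECAppR C E1 => EAppR (plug C X) (ectx_ctx_plug E1 X)
  | ECAppL E1 V => EAppL (ectx_ctx_plug E1 X) (plug V X)
  end.

Lemma plug_ectx_ctx_fill E D X :
  plug (ectx_ctx_fill E D) X = eplug (ectx_ctx_plug E X) (plug D X).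
Proof. induction E; simpl; rewrite ?IHE; reflexivity. Qed.

Lemma holes_ectx_ctx_fill E D :
  holes (ectx_ctx_fill E D) + 1 = holes (ectx_ctx_fill E CHole) + holes D.
Proof. induction E; simpl; lia. Qed.

Lemma ctx_decompose C :
  ctx_closed_at 0 C ->
  (exists A, C = CLam A) \/
  (exists C', forall X, closed X -> step (plug C X) (plug C' X)) \/
  (exists E, C = ectx_ctx_fill E CHole /\
             forall X, closed X -> valid_ectx (ectx_ctx_plug E X)).
Proof.
  induction C as [n | | C1 IH1 C2 IH2 | A _]; simpl; intros HC.
  - lia.
  - right; right; exists ECHole; split; [reflexivity | simpl; tauto].
  - destruct HC as [HC1 HC2].
    assert (Hplug : forall D X, closed X -> ctx_closed_at 0 D -> closed (plug D X))
      by (intros D X HX HD; apply closed_at_plug; assumption).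
    assert (Hval : forall A X, closed X -> ctx_closed_at 0 (CLam A) -> is_value (plug (CLam A) X))
      by (intros A X HX HA; split; [apply Hplug; assumption | eexists; reflexivity]).
    destruct (IH2 HC2) as [[A ->] | [[C' HC'] | [E [-> HE]]]].
    + destruct (IH1 HC1) as [[B ->] | [[C' HC'] | [E [-> HE]]]].
      * right; left; exists (ctx_subst 0 (CLam A) B); intros X HX.
        rewrite plug_ctx_subst by exact HX.
        apply step_beta; [apply (Hplug (CLam B)) | apply Hval]; assumption.
      * right; left; exists (CApp C' (CLam A)); intros X HX.
        apply step_appL; [apply Hval | apply HC']; assumption.
      * right; right; exists (ECAppL E (CLam A)); split; [reflexivity |].
        intros X HX; split; [apply Hval | apply HE]; assumption.
    + right; left; exists (CApp C1 C'); intros X HX.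
      apply step_appR; [apply Hplug | apply HC']; assumption.
    + right; right; exists (ECAppR C1 E); split; [reflexivity |].
      intros X HX; split; [apply Hplug | apply HE]; assumption.
  - left; eauto.
Qed.

Section CIU.

Variables M N : term.
Hypothesis HM : closed M.
Hypothesis HN : closed N.
Hypothesis ciu : forall E, valid_ectx E -> converges (eplug E M) -> converges (eplug E N).

Lemma ciu_plug_Acc T :
  Acc (fun b a => step a b) T ->
  forall C, ctx_closed_at 0 C -> plug C M = T -> converges (plug C N).
Proof.
  induction 1 as [T _ IHstep]; intros C.
  induction C as [C IHholes] using (well_founded_ind (well_founded_ltof _ holes)).
  intros HC HCT; subst T.
  destruct (ctx_decompose C HC) as [[A ->] | [[C' HC'] | [E [-> HE]]]].
  - apply converges_value; split; [apply closed_at_plug; assumption | eexists; reflexivity].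
  - assert (HC'closed : ctx_closed_at 0 C').
    { apply (closed_at_plug M); [exact HM |].
      apply (step_closed _ _ (HC' M HM)), closed_at_plug; assumption. }
    destruct (IHstep _ (HC' M HM) C' HC'closed eq_refl) as [V [HV Hval]].
    exists V; split; [eapply rt_trans; [apply rt_step, HC'; exact HN | exact HV] | exact Hval].
  - set (C1 := ectx_ctx_fill E (ctx_of_term M)).
    assert (HC1 : plug C1 M = plug (ectx_ctx_fill E CHole) M)
      by (unfold C1; rewrite !plug_ectx_ctx_fill, plug_ctx_of_term; reflexivity).
    assert (Hconv : converges (plug C1 N)).
    { apply IHholes; [| | exact HC1].
      - unfold ltof, C1.
        pose proof (holes_ectx_ctx_fill E (ctx_of_term M)) as Hh.
        rewrite holes_ctx_of_term in Hh; simpl in Hh; lia.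
      - apply (closed_at_plug M); [exact HM |].
        rewrite HC1; apply closed_at_plug; assumption. }
    unfold C1 in Hconv; rewrite plug_ectx_ctx_fill, plug_ctx_of_term in Hconv.
    rewrite plug_ectx_ctx_fill; apply ciu; [apply HE, HN | exact Hconv].
Qed.

Lemma ciu_plug C : closed (plug C M) -> converges (plug C M) -> converges (plug C N).
Proof.
  intros HC Hconv.
  apply (ciu_plug_Acc _ (converges_Acc _ Hconv)); [| reflexivity].
  apply (closed_at_plug M); assumption.
Qed.

End CIU.

Fixpoint ctx_of_ectx (E : ectx) : ctx :=
  match E with
  | EHole => CHole
  | EAppR P E1 => CApp (ctx_of_term P) (ctx_of_ectx E1)
  | EAppL E1 V => CApp (ctx_of_ectx E1) (ctx_of_term V)
  end.

Lemma plug_ctx_of_ectx E X : plug (ctx_of_ectx E) X = eplug E X.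
Proof. induction E; simpl; rewrite ?plug_ctx_of_term, ?IHE; reflexivity. Qed.

Lemma eplug_closed E X : valid_ectx E -> closed X -> closed (eplug E X).
Proof.
  unfold closed; induction E; simpl; intros HE HX.
  - exact HX.
  - destruct HE; split; auto.
  - destruct HE as [[HV _] HE]; split; auto.
Qed.

Theorem mainTheorem12 (M N : term) (HM : closed M) (HN : closed N) :
  ctx_equiv M N <-> ectx_equiv M N.
Proof.
  split.
  - intros Hctx E HE.
    specialize (Hctx (ctx_of_ectx E)); rewrite !plug_ctx_of_ectx in Hctx.
    apply Hctx; apply eplug_closed; assumption.
  - intros Hectx C HCM HCN; split; apply ciu_plug; auto;
      intros E HE; apply Hectx, HE.
Qed.
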